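(* Let $\Lambda$ be a connected row-finite $k$-graph with no sources, $\pi\Lambda$ its fundamental group at a fixed vertex, and $c:\Lambda\to\pi\Lambda$ a cocycle such that $\Lambda\times_c\pi\Lambda$ is isomorphic to the universal covering of $\Lambda$. Fix a descending chain $\cdots\lhd H_{n+1}\lhd H_n\lhd\cdots\lhd H_1:=\pi\Lambda$ of finite-index normal subgroups; let $G_n:=\pi\Lambda/H_n$, $q_n(gH_{n+1})=gH_n$, $c_n(\lambda):=c(\lambda)H_n$, $\Lambda_n:=\Lambda\times_{c_n}G_n$ and $p_n:\Lambda_{n+1}\to\Lambda_n$, $p_n(\lambda,g)=(\lambda,q_n(g))$. Then the $(k+1)$-graph $\mathrm{tower}(\Lambda_n,p_n)$ has no local periodicity if and only if the following holds: whenever $v\in\Lambda^0$ and $p\neq q\in\mathbb N^k$ satisfy $\sigma^p(x)=\sigma^q(x)$ for all $x\in v\Lambda^\infty$, there exist $x\in v\Lambda^\infty$, $l\in\mathbb N^k$ and $N\in\mathbb N$ such that $c_N(x(p,p+l))\neq c_N(x(q,q+l))$.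
   Context: An infinite path in a $k$-graph $\Lambda$ is a degree-preserving functor $x:\Omega_k\to\Lambda$, where $\Omega_k=\{(p,q)\in\mathbb N^k\times\mathbb N^k:p\le q\}$ with $d(p,q)=q-p$; $\Lambda^\infty$ is the set of infinite paths, $v\Lambda^\infty$ those with $x(0)=v$, and $\sigma^n(x)$ is the infinite path with $\sigma^n(x)(p,q)=x(p+n,q+n)$. A $k$-graph has no local periodicity if for every vertex $v$ and all $m\neq n\in\mathbb N^k$ there is $x\in v\Lambda^\infty$ with $\sigma^m(x)\neq\sigma^n(x)$. Skew product $\Lambda\times_cH$: paths $\Lambda^n\times H$ of degree $n$, $r(\lambda,g)=(r(\lambda),c(\lambda)g)$, $s(\lambda,g)=(s(\lambda),g)$, $(\mu,c(\nu)g)(\nu,g)=(\mu\nu,g)$. With $p_{n,m}:=p_n\circ\cdots\circ p_{m-1}$, the tower graph $\mathrm{tower}(\Lambda_n,p_n)$ is the $(k+1)$-graph with vertices $\bigsqcup_n\Lambda_n^0$ and morphisms triples $(n,j,\lambda)$, $n\ge1$, $j\ge0$, $\lambda\in\Lambda_{n+j}$, of degree $(d(\lambda),j)$, range $p_{n,n+j}(r(\lambda))\in\Lambda_n^0$, source $s(\lambda)\in\Lambda_{n+j}^0$, with $(n,j,\mu)(n+j,i,\lambda)=(n,j+i,\tilde\mu\lambda)$ where $\tilde\mu\in\Lambda_{n+j+i}$ is the unique lift of $\mu$ under $p_{n+j,n+j+i}$ with $s(\tilde\mu)=r(\lambda)$. *)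

From Stdlib Require Import ClassicalEpsilon Relations List.
From mathcomp Require Import all_boot.

Set Implicit Arguments.
Unset Strict Implicit.
Unset Printing Implicit Defensive.

Definition Nk (k : nat) := {ffun 'I_k -> nat}.
Definition zeroN (k : nat) : Nk k := [ffun => 0%N].
Definition addN (k : nat) (p q : Nk k) : Nk k := [ffun i => (p i + q i)%N].
Definition subN (k : nat) (p q : Nk k) : Nk k := [ffun i => (p i - q i)%N].
Definition leN (k : nat) (p q : Nk k) : bool := [forall i, p i <= q i].

(* (m, j) in N^(k+1): the first k coordinates are m, the last one is j *)
Definition extN (k : nat) (m : Nk k) (j : nat) : Nk k.+1 :=
  [ffun i : 'I_k.+1 => if unlift ord_max i is Some i' then m i' else j].

(* Composition is a total function, only meaningful on composable      *)
(* pairs (src mu = rng nu).                                            *)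
Record kdata (k : nat) := KData {
  Obj : Type;
  Mor : Type;
  rng : Mor -> Obj;
  src : Mor -> Obj;
  deg : Mor -> Nk k;
  comp : Mor -> Mor -> Mor;
  idm : Obj -> Mor }.
Arguments rng {k L} _ : rename.
Arguments src {k L} _ : rename.
Arguments deg {k L} _ : rename.
Arguments comp {k L} _ _ : rename.
Arguments idm {k L} _ : rename.

Definition is_kgraph (k : nat) (L : kdata k) : Prop :=
  ((exists f : Mor L -> nat, injective f) /\ (exists f : Obj L -> nat, injective f)) /\
  [/\ (forall v : Obj L, rng (idm v) = v /\ src (idm v) = v /\ deg (idm v) = zeroN k),
      (forall mu nu : Mor L, src mu = rng nu ->
          [/\ rng (comp mu nu) = rng mu, src (comp mu nu) = src nu &
              deg (comp mu nu) = addN (deg mu) (deg nu)]),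
      (forall l : Mor L, comp (idm (rng l)) l = l /\ comp l (idm (src l)) = l) &
      (forall l mu nu : Mor L, src l = rng mu -> src mu = rng nu ->
          comp (comp l mu) nu = comp l (comp mu nu))] /\
      (forall (l : Mor L) (m n : Nk k), deg l = addN m n ->
          exists! mn : Mor L * Mor L,
            [/\ src mn.1 = rng mn.2, deg mn.1 = m, deg mn.2 = n & l = comp mn.1 mn.2]).

Definition row_finite (k : nat) (L : kdata k) : Prop :=
  forall (v : Obj L) (n : Nk k), exists s : seq (Mor L),
    forall l : Mor L, rng l = v -> deg l = n -> In l s.

Definition no_sources (k : nat) (L : kdata k) : Prop :=
  forall (v : Obj L) (n : Nk k), exists l : Mor L, rng l = v /\ deg l = n.

Definition connected (k : nat) (L : kdata k) : Prop :=
  forall u w : Obj L,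
    clos_refl_sym_trans (Obj L) (fun a b => exists l : Mor L, rng l = a /\ src l = b) u w.

(* A walk is a list of (l, true) = l  or (l, false) = l^{-1}, written in
   composition order; walk_between w x y : w is a morphism of the
   fundamental groupoid from y to x. *)
Fixpoint walk_between (k : nat) (L : kdata k) (w : seq (Mor L * bool)) (x y : Obj L) : Prop :=
  match w with
  | [::] => x = y
  | e :: w' =>
      let a := if e.2 then rng e.1 else src e.1 in
      let z := if e.2 then src e.1 else rng e.1 in
      a = x /\ walk_between w' z y
  end.

Definition hgen (k : nat) (L : kdata k) (w w' : seq (Mor L * bool)) : Prop :=
  exists (w1 w2 : seq (Mor L * bool)),
    (exists (l : Mor L) (b : bool),
        w = w1 ++ (l, b) :: (l, ~~ b) :: w2 /\ w' = w1 ++ w2)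
 \/ (exists v : Obj L, exists b : bool,
        w = w1 ++ (idm v, b) :: w2 /\ w' = w1 ++ w2)
 \/ (exists mu nu : Mor L, src mu = rng nu /\
        w = w1 ++ (comp mu nu, true) :: w2 /\ w' = w1 ++ (mu, true) :: (nu, true) :: w2)
 \/ (exists mu nu : Mor L, src mu = rng nu /\
        w = w1 ++ (comp mu nu, false) :: w2 /\ w' = w1 ++ (nu, false) :: (mu, false) :: w2).

Definition hstep (k : nat) (L : kdata k) (w w' : seq (Mor L * bool)) : Prop :=
  exists x y : Obj L, walk_between w x y /\ walk_between w' x y /\ hgen w w'.

Definition homotopic (k : nat) (L : kdata k) := clos_refl_sym_trans _ (@hstep k L).

Definition simply_connected (k : nat) (L : kdata k) : Prop :=
  forall (v : Obj L) (w : seq (Mor L * bool)), walk_between w v v -> homotopic w [::].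

Record grp := Grp {
  gcar :> Type;
  gmul : gcar -> gcar -> gcar;
  gone : gcar;
  ginv : gcar -> gcar;
  gmulA : forall x y z, gmul x (gmul y z) = gmul (gmul x y) z;
  gmul1 : forall x, gmul gone x = x;
  gmulV : forall x, gmul (ginv x) x = gone }.

Definition normal_subgroup (G : grp) (H : G -> Prop) : Prop :=
  [/\ H (gone G),
      (forall x y, H x -> H y -> H (gmul x y)),
      (forall x, H x -> H (ginv x)) &
      (forall g x, H x -> H (gmul (gmul g x) (ginv g)))].

Definition finite_index (G : grp) (H : G -> Prop) : Prop :=
  exists s : seq G, forall g : G, exists t, In t s /\ H (gmul (ginv t) g).

Definition lcoset (G : grp) (H : G -> Prop) (g : G) : G -> Prop :=
  fun x => H (gmul (ginv g) x).

Definition Qt (G : grp) (H : G -> Prop) : Type :=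
  {S : G -> Prop | exists g : G, S = lcoset H g}.

Definition cosQ (G : grp) (H : G -> Prop) (g : G) : Qt H :=
  exist _ (lcoset H g) (ex_intro _ g erefl).

Definition repQ (G : grp) (H : G -> Prop) (A : Qt H) : G :=
  proj1_sig (constructive_indefinite_description _ (proj2_sig A)).

(* multiplication in G/H (well defined when H is normal) *)
Definition Qmul (G : grp) (H : G -> Prop) (A B : Qt H) : Qt H :=
  cosQ H (gmul (repQ A) (repQ B)).

Definition cocycle (k : nat) (L : kdata k) (G : grp) (c : Mor L -> G) : Prop :=
  forall mu nu : Mor L, src mu = rng nu -> c (comp mu nu) = gmul (c mu) (c nu).

(* Lambda x_c T : paths Lambda^n x T of degree n, r(l,g) = (r l, c(l) g),
   s(l,g) = (s l, g), (mu, c(nu) g)(nu, g) = (mu nu, g). *)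
Definition skew (k : nat) (L : kdata k) (T : Type) (mul : T -> T -> T) (c : Mor L -> T)
  : kdata k :=
  @KData k (Obj L * T)%type (Mor L * T)%type
    (fun x => (rng x.1, mul (c x.1) x.2))
    (fun x => (src x.1, x.2))
    (fun x => deg x.1)
    (fun x y => (comp x.1 y.1, y.2))
    (fun v => (idm v.1, v.2)).

(* The tower graph of a sequence (L n, p n), levels indexed from 0      *)
Section Tower.
Local Unset Implicit Arguments.
Variables (k : nat) (L : nat -> kdata k).
Variables (pO : forall n, Obj (L n.+1) -> Obj (L n))
          (pM : forall n, Mor (L n.+1) -> Mor (L n)).

Fixpoint iterO (n j : nat) : Obj (L (j + n)) -> Obj (L n) :=
  match j return Obj (L (j + n)) -> Obj (L n) with
  | 0 => fun x => x
  | j'.+1 => fun x => @iterO n j' (@pO (j' + n) x)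
  end.
Fixpoint iterM (n j : nat) : Mor (L (j + n)) -> Mor (L n) :=
  match j return Mor (L (j + n)) -> Mor (L n) with
  | 0 => fun x => x
  | j'.+1 => fun x => @iterM n j' (@pM (j' + n) x)
  end.

Definition towObj : Type := {n : nat & Obj (L n)}.
Definition towMor : Type := {n : nat & {j : nat & Mor (L (j + n))}}.

Definition tow_rng (t : towMor) : towObj :=
  existT _ (projT1 t) (iterO (projT1 t) (projT1 (projT2 t)) (rng (projT2 (projT2 t)))).
Definition tow_src (t : towMor) : towObj :=
  existT _ (projT1 (projT2 t) + projT1 t) (src (projT2 (projT2 t))).
Definition tow_deg (t : towMor) : Nk k.+1 :=
  extN (deg (projT2 (projT2 t))) (projT1 (projT2 t)).
Definition tow_idm (v : towObj) : towMor :=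
  existT _ (projT1 v) (existT _ 0 (idm (projT2 v))).

Lemma tow_lvl_eq (n j n' i : nat) : n' = j + n -> i + n' = (j + i) + n.
Proof. by move=> ->; rewrite addnA [i + j]addnC. Qed.

Definition castMor (a b : nat) (e : a = b) (x : Mor (L a)) : Mor (L b) :=
  eq_rect a (fun m => Mor (L m)) x b e.

(* the unique lift of mu : L_{n'} under p_{n', n'+i} with source r(l) *)
Definition tow_lift (n' i : nat) (mu : Mor (L n')) (l : Mor (L (i + n'))) : Mor (L (i + n')) :=
  epsilon (inhabits l) (fun nu => iterM n' i nu = mu /\ src nu = rng l).

(* (n, j, mu)(n + j, i, l) = (n, j + i, mu~ l) *)
Definition tow_comp (t u : towMor) : towMor :=
  match t, u with
  | existT n (existT j mu), existT n' (existT i l) =>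
      match @eqP _ n' (j + n) with
      | ReflectT e =>
          existT _ n (existT _ (j + i)
            (castMor _ _ (tow_lvl_eq n j n' i e)
               (comp (tow_lift n' i (castMor _ _ (esym e) mu) l) l)))
      | ReflectF _ => t
      end
  end.

Definition tower : kdata k.+1 :=
  @KData k.+1 towObj towMor tow_rng tow_src tow_deg tow_comp tow_idm.
End Tower.
Arguments tower {k L} pO pM.

(* x : Omega_k -> L, a degree preserving functor; x p q is x(p,q) for p <= q *)
Definition is_infpath (k : nat) (L : kdata k) (x : Nk k -> Nk k -> Mor L) : Prop :=
  [/\ (forall p, x p p = idm (rng (x p p))),
      (forall p q, leN p q ->
         [/\ rng (x p q) = rng (x p p), src (x p q) = rng (x q q) &
             deg (x p q) = subN q p]) &
      (forall p q r, leN p q -> leN q r -> x p r = comp (x p q) (x q r))].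

Definition ipvert (k : nat) (L : kdata k) (x : Nk k -> Nk k -> Mor L) : Obj L :=
  rng (x (zeroN k) (zeroN k)).

Definition shift (k : nat) (L : kdata k) (n : Nk k) (x : Nk k -> Nk k -> Mor L) :=
  fun p q => x (addN p n) (addN q n).

Definition infeq (k : nat) (L : kdata k) (x y : Nk k -> Nk k -> Mor L) : Prop :=
  forall p q, leN p q -> x p q = y p q.

Definition no_local_periodicity (k : nat) (L : kdata k) : Prop :=
  forall (v : Obj L) (m n : Nk k), m != n ->
    exists x, [/\ is_infpath x, ipvert x = v & ~ infeq (shift m x) (shift n x)].

(* The specific data of Lemma 5.4 (levels indexed from 0: H 0 = pi Lambda) *)
Section Lemma54Data.
Variables (k : nat) (L : kdata k) (G : grp) (c : Mor L -> G) (H : nat -> G -> Prop).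

Definition cN (n : nat) (l : Mor L) : Qt (H n) := cosQ (H n) (c l).
Definition LamN (n : nat) : kdata k := skew (@Qmul G (H n)) (cN n).
Definition qN (n : nat) (A : Qt (H n.+1)) : Qt (H n) := cosQ (H n) (repQ A).
Definition pON (n : nat) (x : Obj (LamN n.+1)) : Obj (LamN n) := (x.1, qN x.2).
Definition pMN (n : nat) (x : Mor (LamN n.+1)) : Mor (LamN n) := (x.1, qN x.2).
End Lemma54Data.

From Pilot Require Import Defs.
From mathcomp Require Import all_boot zify.
From Stdlib Require Import ClassicalEpsilon ProofIrrelevance FunctionalExtensionality
  PropExtensionality Eqdep_dec PeanoNat Classical.

(* An infinite path of the tower starting at level n is a path of Lambda together with
   level data: its vertex at degree (a, t) sits at level n + t and carries the coset of
   c(x(0, a))^-1 g, where gH_n is the coset of its starting vertex.  Conversely, any path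
   x of Lambda and any coset gH_n lift to such a tower path.  Shifting by degrees whose
   last coordinates differ changes the starting level; shifting by (p, 0) and (q, 0)
   gives equal tower paths exactly when the shifts of x agree and
   c_N(x(0, p + l)) = c_N(x(0, q + l)) for all l and N.  Comparing the two notions of
   periodicity this way gives both implications.  Connectedness, row-finiteness, absence
   of sources, the universal covering, finite index and H_0 = pi Lambda are not needed. *)

Set Implicit Arguments.

Section Group.
Variable G : grp.
Local Notation "x * y" := (gmul x y).
Local Notation "x ^-1" := (ginv x).
Local Notation one := (gone G).

Lemma gmulrV (x : G) : x * x^-1 = one.
Proof.
have h : (x^-1)^-1 * x^-1 = one by apply: gmulV.
by rewrite -[x * _]gmul1 -h -gmulA (gmulA x^-1) gmulV gmul1.
Qed.

Lemma gmulr1 (x : G) : x * one = x.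
Proof. by rewrite -(gmulV x) gmulA gmulrV gmul1. Qed.

Lemma gmulKg (x y : G) : x^-1 * (x * y) = y.
Proof. by rewrite gmulA gmulV gmul1. Qed.

Lemma gmulKVg (x y : G) : x * (x^-1 * y) = y.
Proof. by rewrite gmulA gmulrV gmul1. Qed.

Lemma ginv_unique (x y : G) : x * y = one -> x^-1 = y.
Proof. by move=> h; rewrite -[y](gmulKg x) h gmulr1. Qed.

Lemma ginvK (x : G) : (x^-1)^-1 = x.
Proof. by apply: ginv_unique; rewrite gmulV. Qed.

Lemma ginvM (x y : G) : (x * y)^-1 = y^-1 * x^-1.
Proof. by apply: ginv_unique; rewrite -gmulA gmulKVg gmulrV. Qed.

Lemma ginv1 : one^-1 = one.
Proof. by apply: ginv_unique; rewrite gmul1. Qed.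

Lemma repQK (H : G -> Prop) (A : Qt H) : cosQ H (repQ A) = A.
Proof.
apply: eq_sig_hprop => [? ? ?|]; first exact: proof_irrelevance.
by rewrite /repQ /=; case: constructive_indefinite_description.
Qed.

Variable H : G -> Prop.
Hypothesis hN : normal_subgroup H.

Lemma lcoset_eq (a b : G) : H (a^-1 * b) -> lcoset H a = lcoset H b.
Proof.
case: hN => _ hM hV _ hab.
apply: functional_extensionality => x; apply: propositional_extensionality.
rewrite /lcoset; split=> hx.
- by have := hM _ _ (hV _ hab) hx; rewrite ginvM ginvK -gmulA gmulKVg.
- by have := hM _ _ hab hx; rewrite -gmulA gmulKVg.
Qed.

Lemma cosQ_eqP (a b : G) : cosQ H a = cosQ H b <-> H (a^-1 * b).
Proof.
split=> [e | hab].
- have := f_equal (fun A : Qt H => proj1_sig A b) e.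
  by case: hN => h1 _ _ _; rewrite /= /lcoset gmulV => ->.
- apply: eq_sig_hprop => [? ? ?|]; first exact: proof_irrelevance.
  exact: lcoset_eq.
Qed.

Lemma repQ_cosQ (a : G) : H (a^-1 * repQ (cosQ H a)).
Proof. by apply/cosQ_eqP; rewrite repQK. Qed.

Lemma Qmul_cosQ (a b : G) : Qmul (cosQ H a) (cosQ H b) = cosQ H (a * b).
Proof.
rewrite /Qmul; apply/cosQ_eqP.
have ha := repQ_cosQ a; have hb := repQ_cosQ b.
case: hN => _ hM hV hC.
set a' := repQ _ in ha *; set b' := repQ _ in hb *.
have := hM _ _ (hC (b'^-1) _ (hV _ ha)) (hV _ hb).
by rewrite !ginvM !ginvK -!gmulA gmulKVg.
Qed.

Lemma Qmul_cancel_l (A B1 B2 : Qt H) : Qmul A B1 = Qmul A B2 -> B1 = B2.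
Proof.
rewrite /Qmul => /cosQ_eqP; rewrite ginvM -gmulA gmulKg => /cosQ_eqP.
by rewrite !repQK.
Qed.

Lemma cosQ_invmul (a b g : G) :
  cosQ H (a^-1 * g) = cosQ H (b^-1 * g) -> cosQ H a = cosQ H b.
Proof.
move=> /cosQ_eqP h; apply/cosQ_eqP.
case: hN => _ _ hV hC.
have := hV _ (hC a^-1 _ (hC g _ h)).
by rewrite !ginvM !ginvK -!gmulA !gmulKVg gmulV gmulr1.
Qed.

End Group.

Section Degrees.
Variable k : nat.

Definition fstN (P : Nk k.+1) : Nk k := [ffun i => P (lift ord_max i)].
Definition lstN (P : Nk k.+1) : nat := P ord_max.

Lemma fstN_ext (a : Nk k) j : fstN (extN a j) = a.
Proof. by apply/ffunP => i; rewrite !ffunE liftK. Qed.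

Lemma lstN_ext (a : Nk k) j : lstN (extN a j) = j.
Proof. by rewrite /lstN ffunE unlift_none. Qed.

Lemma extN_eta P : extN (fstN P) (lstN P) = P.
Proof.
apply/ffunP => i; rewrite ffunE.
by case: (unliftP ord_max i) => [j ->|->]; rewrite ?ffunE.
Qed.

Lemma extN_inj (a b : Nk k) s t : extN a s = extN b t -> a = b /\ s = t.
Proof.
move=> e; have := f_equal fstN e; have := f_equal lstN e.
by rewrite !fstN_ext !lstN_ext.
Qed.

Lemma fstN_add P Q : fstN (addN P Q) = addN (fstN P) (fstN Q).
Proof. by apply/ffunP => i; rewrite !ffunE. Qed.

Lemma lstN_add P Q : lstN (addN P Q) = lstN P + lstN Q.
Proof. by rewrite /lstN ffunE. Qed.

Lemma fstN_sub P Q : fstN (subN P Q) = subN (fstN P) (fstN Q).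
Proof. by apply/ffunP => i; rewrite !ffunE. Qed.

Lemma lstN_sub P Q : lstN (subN P Q) = lstN P - lstN Q.
Proof. by rewrite /lstN ffunE. Qed.

Lemma fstN0 : fstN (zeroN k.+1) = zeroN k.
Proof. by apply/ffunP => i; rewrite !ffunE. Qed.

Lemma lstN0 : lstN (zeroN k.+1) = 0.
Proof. by rewrite /lstN ffunE. Qed.

Lemma extN0 : extN (zeroN k) 0 = zeroN k.+1.
Proof. by rewrite -fstN0 -lstN0 extN_eta. Qed.

Lemma leNP (p q : Nk k) : leN p q <-> forall i, p i <= q i.
Proof. by split => [/forallP|h]; last apply/forallP. Qed.

Lemma leN_split P Q : leN P Q = leN (fstN P) (fstN Q) && (lstN P <= lstN Q).
Proof.
apply/idP/andP => [/forallP h | [/forallP h1 h2]].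
- by split; [apply/forallP => i; rewrite !ffunE | exact: h].
- apply/forallP => i; case: (unliftP ord_max i) => [j ->|->] //.
  by have := h1 j; rewrite !ffunE.
Qed.

Lemma leN_ext {a b : Nk k} {s t} : leN a b -> s <= t -> leN (extN a s) (extN b t).
Proof. by move=> hab hst; rewrite leN_split !fstN_ext !lstN_ext hab. Qed.

Lemma leNxx (p : Nk k) : leN p p.
Proof. by apply/leNP. Qed.

Lemma leN_trans {p q r : Nk k} : leN p q -> leN q r -> leN p r.
Proof. by move=> /leNP h1 /leNP h2; apply/leNP => i; exact: leq_trans (h1 i) (h2 i). Qed.

Lemma leN_add2r {p q : Nk k} (m : Nk k) : leN p q -> leN (addN p m) (addN q m).
Proof. by move=> /leNP h; apply/leNP => i; rewrite !ffunE leq_add2r. Qed.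

Lemma le0N (p : Nk k) : leN (zeroN k) p.
Proof. by apply/leNP => i; rewrite ffunE. Qed.

Lemma addNC (p q : Nk k) : addN p q = addN q p.
Proof. by apply/ffunP => i; rewrite !ffunE addnC. Qed.

Lemma add0N (p : Nk k) : addN (zeroN k) p = p.
Proof. by apply/ffunP => i; rewrite !ffunE. Qed.

Lemma subNN (p : Nk k) : subN p p = zeroN k.
Proof. by apply/ffunP => i; rewrite !ffunE subnn. Qed.

End Degrees.

Section KGraph.
Variables (k : nat) (L : kdata k).
Hypothesis hL : is_kgraph L.

Lemma kg_comp (mu nu : Mor L) : src mu = rng nu ->
  [/\ rng (Defs.comp mu nu) = rng mu, src (Defs.comp mu nu) = src nu &
      deg (Defs.comp mu nu) = addN (deg mu) (deg nu)].
Proof. by case: hL => _ [[_ h _ _] _]; apply: h. Qed.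

Lemma kg_idm (v : Obj L) : [/\ rng (idm v) = v, src (idm v) = v & deg (idm v) = zeroN k].
Proof. by case: hL => _ [[h _ _ _] _]; case: (h v) => ? [? ?]. Qed.

Lemma kg_unit (l : Mor L) : Defs.comp (idm (rng l)) l = l /\ Defs.comp l (idm (src l)) = l.
Proof. by case: hL => _ [[_ _ h _] _]; apply: h. Qed.

(* Unique factorisation of [l] as [idm (rng l) * l = l * idm (src l)]. *)
Lemma deg0_idm {l : Mor L} : deg l = zeroN k -> l = idm (rng l).
Proof.
move=> d0; case: hL => _ [_ hf].
have e : deg l = addN (zeroN k) (zeroN k) by rewrite d0 add0N.
case: (hf l _ _ e) => mn [_ uq].
have [_ s1 d1] := kg_idm (rng l); have [r2 _ d2] := kg_idm (src l).
have [u1 u2] := kg_unit l.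
have e1 := uq (idm (rng l), l) (And4 s1 d1 d0 (esym u1)).
have e2 := uq (l, idm (src l)) (And4 (esym r2) d0 d2 (esym u2)).
by move/esym: e1; rewrite e2; case=> ->.
Qed.

Lemma comp_deg0l {mu nu : Mor L} : src mu = rng nu -> deg mu = zeroN k -> Defs.comp mu nu = nu.
Proof.
move=> e /deg0_idm d.
have -> : mu = idm (rng nu) by rewrite -e d; have [_ -> _] := kg_idm (rng mu).
exact: (kg_unit nu).1.
Qed.

Lemma comp_deg0r {mu nu : Mor L} : src mu = rng nu -> deg nu = zeroN k -> Defs.comp mu nu = mu.
Proof.
move=> e /deg0_idm d; rewrite d -e; exact: (kg_unit mu).2.
Qed.

Lemma cocycle_idm (G : grp) (c : Mor L -> G) : cocycle c -> forall v, c (idm v) = gone G.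
Proof.
move=> hc v; have [r1 s1 _] := kg_idm v.
have e : src (idm v) = rng (idm v) by rewrite r1 s1.
have := hc _ _ e; rewrite {1}(_ : Defs.comp (idm v) (idm v) = idm v).
- by move/(f_equal (gmul (ginv (c (idm v))))); rewrite gmulKg gmulV.
- by have := (kg_unit (idm v)).1; rewrite r1.
Qed.

End KGraph.

Section InfPath.
Variables (k : nat) (L : kdata k) (x : Nk k -> Nk k -> Mor L).
Hypothesis hx : is_infpath x.

Lemma ipath_idm a : x a a = idm (rng (x a a)).
Proof. by case: hx. Qed.

Lemma ipath_rng {a b} : leN a b -> rng (x a b) = rng (x a a).
Proof. by case: hx => _ h _ /h []. Qed.

Lemma ipath_src {a b} : leN a b -> src (x a b) = rng (x b b).
Proof. by case: hx => _ h _ /h []. Qed.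

Lemma ipath_deg {a b} : leN a b -> deg (x a b) = subN b a.
Proof. by case: hx => _ h _ /h []. Qed.

Lemma ipath_comp {a b d} : leN a b -> leN b d -> x a d = Defs.comp (x a b) (x b d).
Proof. by case: hx => _ _ h; apply: h. Qed.

Lemma ipath_srng {a b d} : leN a b -> leN b d -> src (x a b) = rng (x b d).
Proof. by move=> h1 h2; rewrite ipath_src // ipath_rng. Qed.

End InfPath.

(* The condition produces infinite paths: at a vertex without any, the periodicity
   hypothesis for 0 and (1, ..., 1) holds vacuously. *)
Lemma infpath_exists (k : nat) (L : kdata k) (u : Obj L) : is_kgraph L ->
  (forall p q : Nk k, p != q ->
     (forall x, is_infpath x -> ipvert x = u -> infeq (shift p x) (shift q x)) ->
     exists x, is_infpath x /\ ipvert x = u) ->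
  exists x, is_infpath x /\ ipvert x = u.
Proof.
move=> hL hR; apply: NNPP => hno; case: (posnP k) => [k0 | kpos].
- apply: hno; exists (fun _ _ => idm u).
  have [r1 s1 d1] := kg_idm hL u.
  split=> //; split=> [p | p q _ | p q r _ _]; rewrite ?r1 //.
  + split; rewrite ?r1 ?s1 // d1.
    by apply/ffunP => i; have := ltn_ord i; rewrite {2}k0.
  + by have := (kg_unit hL (idm u)).1; rewrite r1.
- have hpq : zeroN k != [ffun => 1].
    by apply/eqP => /(f_equal (fun f : Nk k => f (Ordinal kpos))); rewrite !ffunE.
  have [x hx] := hR _ _ hpq (fun x hx hxv => False_ind _ (hno (ex_intro _ x (conj hx hxv)))).
  exact: (hno (ex_intro _ x hx)).
Qed.

Section Tower.
Variables (k : nat) (L : kdata k) (G : grp) (c : Mor L -> G) (H : nat -> G -> Prop).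
Hypothesis hL : is_kgraph L.
Hypothesis hN : forall n, normal_subgroup (H n).
Hypothesis hHS : forall n g, H n.+1 g -> H n g.

Local Notation LN := (LamN c H).
Local Notation T := (tower (@pON k L G c H) (@pMN k L G c H)).
Local Notation itO := (iterO k LN (@pON k L G c H)).
Local Notation itM := (Defs.iterM k LN (@pMN k L G c H)).

Lemma H_le {N M g} : N <= M -> H M g -> H N g.
Proof.
move=> /subnK <-; elim: (M - N) => [|d IH] //= h.
by apply: IH; apply: hHS; rewrite addSn in h.
Qed.

Lemma cosQ_repQ_le N M (a : G) : N <= M -> cosQ (H N) (repQ (cosQ (H M) a)) = cosQ (H N) a.
Proof.
move=> hNM; apply/(cosQ_eqP (hN _)); apply: (H_le hNM).
have := repQ_cosQ (hN M) a.
by case: (hN M) => _ _ hV _ /hV; rewrite ginvM ginvK.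
Qed.

Lemma iterO_fst n j (z : Obj (LN (j + n))) : (itO n j z).1 = z.1.
Proof. by elim: j z => [|j IH] z //=; rewrite IH. Qed.

Lemma iterM_fst n j (z : Mor (LN (j + n))) : (itM n j z).1 = z.1.
Proof. by elim: j z => [|j IH] z //=; rewrite IH. Qed.

Lemma iterOM_snd n j u l (A : Qt (H (j + n))) : (itO n j (u, A)).2 = (itM n j (l, A)).2.
Proof. by elim: j u l A => [|j IH] u l A //=; exact: (IH u l (qN A)). Qed.

Lemma iterO_cosQ n j u (a : G) : itO n j (u, cosQ (H (j + n)) a) = (u, cosQ (H n) a).
Proof.
elim: j u a => [|j IH] u a //=.
by rewrite /pON /qN /= cosQ_repQ_le //; apply: IH.
Qed.

Lemma existT_cosQ_eq N1 N2 (e : N1 = N2) (v : Obj L) (a : G) :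
  existT (fun N => Obj (LN N)) N1 (v, cosQ (H N1) a) = existT _ N2 (v, cosQ (H N2) a).
Proof. by subst. Qed.

Definition tbase (z : Mor T) : Mor L := (projT2 (projT2 z)).1.
Definition tvbase (o : Obj T) : Obj L := (projT2 o).1.
Definition tlvl (z : Mor T) : nat := projT1 z.
Definition thgt (z : Mor T) : nat := projT1 (projT2 z).

Lemma tvbase_rng (z : Mor T) : tvbase (rng z) = rng (tbase z).
Proof. by case: z => n [j [l A]]; rewrite /tvbase /= iterO_fst. Qed.

Lemma tvbase_src (z : Mor T) : tvbase (src z) = src (tbase z).
Proof. by case: z => n [j [l A]]. Qed.

Lemma tlvl_rng (z : Mor T) : projT1 (rng z) = tlvl z.
Proof. by case: z => n [j [l A]]. Qed.

Lemma tlvl_src (z : Mor T) : projT1 (src z) = thgt z + tlvl z.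
Proof. by case: z => n [j [l A]]. Qed.

Lemma tbase_idm (o : Obj T) : tbase (idm o) = idm (tvbase o).
Proof. by case: o => N [u A]. Qed.

Lemma tbase_deg (z : Mor T) : deg (tbase z) = fstN (deg z).
Proof. by case: z => n [j [l A]]; rewrite /= /tow_deg fstN_ext. Qed.

Lemma thgt_deg (z : Mor T) : thgt z = lstN (deg z).
Proof. by case: z => n [j [l A]]; rewrite /= /tow_deg lstN_ext. Qed.

Lemma tow_mor_ext (z z' : Mor T) : tlvl z = tlvl z' -> thgt z = thgt z' ->
  tbase z = tbase z' -> src z = src z' -> z = z'.
Proof.
case: z => n [j [l A]]; case: z' => n' [j' [l' A']].
rewrite /tlvl /thgt /tbase /= => en ej el; subst n' j' l' => /= es.
by case: (inj_pair2_eq_dec _ Nat.eq_dec _ _ _ _ es) => ->.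
Qed.

Lemma tow_src_eq (z z' : Mor T) : tlvl z = tlvl z' -> thgt z = 0 -> thgt z' = 0 ->
  rng z = rng z' -> src (tbase z) = src (tbase z') ->
  cN c H (tlvl z) (tbase z) = cN c H (tlvl z) (tbase z') -> src z = src z'.
Proof.
case: z => n [j [l A]]; case: z' => n' [j' [l' A']].
rewrite /tlvl /thgt /tbase /= => en ej ej'; subst n' j j' => er es ec.
have eQ : Qmul (cN c H n l) A = Qmul (cN c H n l') A' :=
  f_equal snd (inj_pair2_eq_dec _ Nat.eq_dec _ _ _ _ er).
rewrite ec in eQ; have eA := Qmul_cancel_l (hN n) eQ.
by rewrite /= /tow_src /= es eA.
Qed.

Lemma castMor_fst a b (e : a = b) (z : Mor (LN a)) : (castMor k LN a b e z).1 = z.1.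
Proof. by case: b / e. Qed.

Lemma castMor_src a b (e : a = b) (z : Mor (LN a)) :
  existT (fun N => Obj (LN N)) b (src (castMor k LN a b e z)) = existT _ a (src z).
Proof. by case: b / e. Qed.

Lemma tow_lift_spec {n i} {mu : Mor (LN n)} {l : Mor (LN (i + n))} :
  src mu = itO n i (rng l) ->
  itM n i (tow_lift k LN (@pMN k L G c H) n i mu l) = mu /\
  src (tow_lift k LN (@pMN k L G c H) n i mu l) = rng l.
Proof.
case: mu => m A e; rewrite /tow_lift.
apply: (epsilon_spec (inhabits l) (fun nu => itM n i nu = (m, A) /\ src nu = rng l)).
exists (m, (rng l).2); split; apply: injective_projections => //=.
- by rewrite iterM_fst.
- by rewrite -(iterOM_snd _ _ (rng l).1) -surjective_pairing -e.
- exact: etrans (f_equal fst e) (iterO_fst _ _ _).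
Qed.

Lemma tow_comp_props {z1 z2 : Mor T} : src z1 = rng z2 ->
  [/\ tlvl (Defs.comp z1 z2) = tlvl z1, thgt (Defs.comp z1 z2) = thgt z1 + thgt z2,
      tbase (Defs.comp z1 z2) = Defs.comp (tbase z1) (tbase z2) &
      src (Defs.comp z1 z2) = src z2].
Proof.
case: z1 => n [j mu]; case: z2 => n' [i l] e12.
have en : n' = j + n by have := f_equal (@projT1 _ _) e12.
subst n'; have [hM hS] := tow_lift_spec (inj_pair2_eq_dec _ Nat.eq_dec _ _ _ _ e12).
rewrite /Defs.comp /= /tow_comp; case: eqP => // e.
rewrite (eq_irrelevance e erefl) /=.
set nu := tow_lift _ _ _ _ _ _ _ in hM hS *.
have e1 : nu.1 = mu.1 by rewrite -(iterM_fst _ _ nu) hM.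
have [_ hsc _] := kg_comp hL nu.1 l.1 (f_equal fst hS).
split=> //; first by rewrite /tbase /= castMor_fst /= e1.
by rewrite /= /tow_src /= castMor_src /= hsc.
Qed.

Lemma tbase_srng (z1 z2 : Mor T) : src z1 = rng z2 -> src (tbase z1) = rng (tbase z2).
Proof. by move=> e; rewrite -tvbase_src e tvbase_rng. Qed.

Section BasePath.
Variable y : Nk k.+1 -> Nk k.+1 -> Mor T.
Hypothesis hy : is_infpath y.
Hypothesis hy0 : projT1 (ipvert y) = 0.

Lemma y_thgt {P Q} : leN P Q -> thgt (y P Q) = lstN Q - lstN P.
Proof. by move=> h; rewrite thgt_deg (ipath_deg hy h) lstN_sub. Qed.

Lemma y_tlvl {P Q} : leN P Q -> tlvl (y P Q) = lstN P.
Proof.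
move=> h; rewrite -tlvl_rng (ipath_rng hy h).
have h0 := le0N P.
have := f_equal (@projT1 _ _) (ipath_src hy h0).
rewrite tlvl_src (y_thgt h0) lstN0 subn0 -tlvl_rng (ipath_rng hy h0).
by rewrite -/(ipvert y) hy0 addn0 => <-.
Qed.

Definition base_path (a b : Nk k) : Mor L := tbase (y (extN a 0) (extN b 0)).

Lemma y_vertical_deg0 (a : Nk k) {s t} : s <= t -> deg (tbase (y (extN a s) (extN a t))) = zeroN k.
Proof.
by move=> h; rewrite tbase_deg (ipath_deg hy (leN_ext (leNxx a) h)) fstN_sub !fstN_ext subNN.
Qed.

(* Go from (a, s) to (b, t) either first vertically or first horizontally. *)
Lemma y_tbase {P Q} : leN P Q -> tbase (y P Q) = base_path (fstN P) (fstN Q).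
Proof.
rewrite -(extN_eta P) -(extN_eta Q) !fstN_ext.
move: (fstN P) (lstN P) (fstN Q) (lstN Q) => a s b t.
rewrite leN_split !fstN_ext !lstN_ext => /andP [hab hst].
have hR0S0 := leN_ext hab (leq0n 0); have hS0S := leN_ext (leNxx b) (leq0n t).
have hR0R := leN_ext (leNxx a) (leq0n s); have hRS := leN_ext hab hst.
have [_ _ e1 _] := tow_comp_props (ipath_srng hy hR0S0 hS0S).
have [_ _ e2 _] := tow_comp_props (ipath_srng hy hR0R hRS).
rewrite -(ipath_comp hy hR0S0 hS0S) in e1; rewrite -(ipath_comp hy hR0R hRS) in e2.
have f1 := comp_deg0r hL (tbase_srng (ipath_srng hy hR0S0 hS0S)) (y_vertical_deg0 b (leq0n t)).
have f2 := comp_deg0l hL (tbase_srng (ipath_srng hy hR0R hRS)) (y_vertical_deg0 a (leq0n s)).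
by rewrite /base_path -f2 -e2 e1 f1.
Qed.

Lemma base_path_infpath : is_infpath base_path /\ ipvert base_path = tvbase (ipvert y).
Proof.
split; last by rewrite /ipvert /base_path extN0 -tvbase_rng.
have le0 (a b : Nk k) : leN a b -> leN (extN a 0) (extN b 0) by move=> h; exact: leN_ext.
split.
- move=> p; apply: (deg0_idm hL); exact: y_vertical_deg0.
- move=> p q /le0 h; rewrite /base_path -tvbase_src -!tvbase_rng (ipath_src hy h).
  by rewrite (ipath_rng hy h) tbase_deg (ipath_deg hy h) fstN_sub !fstN_ext.
- move=> p q r /le0 h1 /le0 h2.
  have [_ _ f _] := tow_comp_props (ipath_srng hy h1 h2).
  by rewrite /base_path (ipath_comp hy h1 h2) f.
Qed.

Lemma y_rng_diag S (Z := extN (zeroN k) (lstN S)) :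
  [/\ rng (y S S) = src (y Z S), tlvl (y Z S) = lstN S, thgt (y Z S) = 0,
      tbase (y Z S) = base_path (zeroN k) (fstN S) & rng (y Z S) = rng (y Z Z)].
Proof.
have hZ : leN Z S by rewrite leN_split fstN_ext lstN_ext le0N leqnn.
rewrite (ipath_src hy hZ) (y_tlvl hZ) (y_thgt hZ) (y_tbase hZ) (ipath_rng hy hZ).
by rewrite !lstN_ext fstN_ext subnn.
Qed.

Lemma y_shift_eq (p q : Nk k) :
  infeq (shift p base_path) (shift q base_path) ->
  (forall (l : Nk k) (N : nat),
     cN c H N (base_path (zeroN k) (addN p l)) = cN c H N (base_path (zeroN k) (addN q l))) ->
  infeq (shift (extN p 0) y) (shift (extN q 0) y).
Proof.
move=> hpq hall P Q hPQ; rewrite /shift.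
have [hx _] := base_path_infpath.
have le1 := leN_add2r (extN p 0) hPQ; have le2 := leN_add2r (extN q 0) hPQ.
apply: tow_mor_ext.
- by rewrite (y_tlvl le1) (y_tlvl le2) !lstN_add !lstN_ext.
- by rewrite (y_thgt le1) (y_thgt le2) !lstN_add !lstN_ext.
- rewrite (y_tbase le1) (y_tbase le2) !fstN_add !fstN_ext.
  by apply: hpq; move: hPQ; rewrite leN_split => /andP [].
rewrite (ipath_src hy le1) (ipath_src hy le2).
have [-> lv1 hg1 tb1 r1] := y_rng_diag (addN Q (extN p 0)).
have [-> lv2 hg2 tb2 r2] := y_rng_diag (addN Q (extN q 0)).
have et : lstN (addN Q (extN q 0)) = lstN (addN Q (extN p 0)) by rewrite !lstN_add !lstN_ext.
rewrite et in lv2 hg2 tb2 r2 *; rewrite !fstN_add !fstN_ext in tb1 tb2.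
apply: tow_src_eq.
- by rewrite lv1 lv2.
- exact: hg1.
- exact: hg2.
- by rewrite r1 r2.
- rewrite tb1 tb2 (ipath_src hx (le0N _)) (ipath_src hx (le0N _)).
  by have := hpq _ _ (leNxx (fstN Q)); rewrite /shift => ->.
- by rewrite tb1 tb2 lv1 (addNC (fstN Q) p) (addNC (fstN Q) q) hall.
Qed.

End BasePath.

Hypothesis hc : cocycle c.

Lemma cocycle_ipath {x} (hx : is_infpath x) {a b} : leN a b ->
  c (x (zeroN k) b) = gmul (c (x (zeroN k) a)) (c (x a b)).
Proof.
move=> hab; rewrite (ipath_comp hx (le0N a) hab); apply: hc.
exact: (ipath_srng hx (le0N a) hab).
Qed.

Section LiftPath.
Variable x : Nk k -> Nk k -> Mor L.
Hypothesis hx : is_infpath x.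
Variables (n : nat) (g : G).

(* With this label at x(b), the range of (x(a, b), label b) in a skew product carries label a. *)
Definition vlabel (b : Nk k) : G := gmul (ginv (c (x (zeroN k) b))) g.

Definition lift_path (P Q : Nk k.+1) : Mor T :=
  existT (fun n0 => {j : nat & Mor (LN (j + n0))}) (n + lstN P)
    (existT (fun j => Mor (LN (j + (n + lstN P)))) (lstN Q - lstN P)
       ((x (fstN P) (fstN Q), cosQ (H ((lstN Q - lstN P) + (n + lstN P))) (vlabel (fstN Q)))
          : Mor (LN ((lstN Q - lstN P) + (n + lstN P))))).

Lemma lift_path_rng {P Q} : leN P Q -> rng (lift_path P Q) =
  existT (fun N => Obj (LN N)) (n + lstN P)
    (rng (x (fstN P) (fstN P)), cosQ (H (n + lstN P)) (vlabel (fstN P))).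
Proof.
rewrite leN_split => /andP [hf _].
rewrite /= /tow_rng /=; congr (existT _ _ _).
rewrite /cN (Qmul_cosQ (hN _)) iterO_cosQ (ipath_rng hx hf); congr (_, _).
by rewrite /vlabel (cocycle_ipath hx hf) ginvM -!gmulA gmulKVg.
Qed.

Lemma lift_path_src {P Q} : leN P Q -> src (lift_path P Q) = rng (lift_path Q Q).
Proof.
rewrite leN_split => /andP [hf hl].
rewrite (lift_path_rng (leNxx Q)) /= /tow_src /= (ipath_src hx hf); apply: existT_cosQ_eq; lia.
Qed.

Lemma lift_path_infpath : is_infpath lift_path.
Proof.
split.
- move=> P; apply: tow_mor_ext => //.
  + by rewrite /thgt /= subnn.
  + by rewrite tbase_idm tvbase_rng /tbase /= -ipath_idm.
  + rewrite (lift_path_rng (leNxx P)) /= /tow_src /= {1}(ipath_idm hx).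
    have [_ -> _] := kg_idm hL (rng (x (fstN P) (fstN P))); apply: existT_cosQ_eq; lia.
- move=> P Q hPQ; split.
  + by rewrite !lift_path_rng // leNxx.
  + exact: lift_path_src.
  + move: hPQ; rewrite leN_split => /andP [hf _].
    by rewrite /= /tow_deg /= (ipath_deg hx hf) -fstN_sub -lstN_sub extN_eta.
- move=> P Q R hPQ hQR.
  have e : src (lift_path P Q) = rng (lift_path Q R).
    by rewrite (lift_path_src hPQ) (lift_path_rng hQR) (lift_path_rng (leNxx Q)).
  have [t1 t2 t3 t4] := tow_comp_props e.
  move: hPQ hQR; rewrite !leN_split => /andP [hf1 hl1] /andP [hf2 hl2].
  apply: tow_mor_ext; rewrite ?t1 ?t2 ?t3 ?t4 //.
  + by rewrite /thgt /=; lia.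
  + by rewrite /tbase /= (ipath_comp hx hf1 hf2).
  + rewrite /= /tow_src /= (ipath_src hx (leN_trans hf1 hf2)) (ipath_src hx hf2).
    apply: existT_cosQ_eq; lia.
Qed.

Lemma lift_path_vert : ipvert lift_path =
  existT (fun N => Obj (LN N)) n (rng (x (zeroN k) (zeroN k)), cosQ (H n) g).
Proof.
rewrite /ipvert (lift_path_rng (leNxx _)) fstN0 lstN0.
rewrite /vlabel (ipath_idm hx) cocycle_idm // ginv1 gmul1; apply: existT_cosQ_eq; lia.
Qed.

Lemma lift_path_shift_lstN (m m' : Nk k.+1) :
  lstN m != lstN m' -> ~ infeq (shift m lift_path) (shift m' lift_path).
Proof.
move=> hne hinf; have := hinf (zeroN _) (zeroN _) (leNxx _).
rewrite /shift !add0N => /(f_equal tlvl); rewrite /tlvl /= => /eqP.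
by rewrite eqn_add2l (negbTE hne).
Qed.

Lemma lift_path_shift_fstN (m m' : Nk k.+1) : infeq (shift m lift_path) (shift m' lift_path) ->
  infeq (shift (fstN m) x) (shift (fstN m') x).
Proof.
move=> hinf a b hab; have := hinf _ _ (leN_ext hab (leqnn 0)).
by rewrite /shift => /(f_equal tbase); rewrite /tbase /= !fstN_add !fstN_ext.
Qed.

Lemma lift_path_shift_cN (m m' : Nk k.+1) (l : Nk k) (N : nat) :
  cN c H N (x (zeroN k) (addN (fstN m) l)) <> cN c H N (x (zeroN k) (addN (fstN m') l)) ->
  ~ infeq (shift m lift_path) (shift m' lift_path).
Proof.
move=> hne hinf; apply: hne.
have := hinf (extN l N) (extN l N) (leNxx _); rewrite /shift.
move/(f_equal (fun z : Mor T => cosQ (H N) (repQ (projT2 (src z)).2))).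
rewrite /= !cosQ_repQ_le ?lstN_add ?lstN_ext; try lia.
rewrite /vlabel !fstN_add !fstN_ext (addNC l) (addNC l).
exact: cosQ_invmul (hN _) _ _ _.
Qed.

End LiftPath.

Lemma lift_path_at {x} (hx : is_infpath x) {n} (A : Qt (H n)) :
  is_infpath (lift_path x n (repQ A)) /\
  ipvert (lift_path x n (repQ A)) = existT (fun N => Obj (LN N)) n (ipvert x, A).
Proof. by split; [exact: lift_path_infpath | rewrite lift_path_vert // repQK]. Qed.

Definition cN_detects_periods (u : Obj L) : Prop :=
  forall p q : Nk k, p != q ->
    (forall x, is_infpath x -> ipvert x = u -> infeq (shift p x) (shift q x)) ->
    exists x (l : Nk k) (N : nat),
      [/\ is_infpath x, ipvert x = u &
          cN c H N (x (zeroN k) (addN p l)) <> cN c H N (x (zeroN k) (addN q l))].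

Lemma lift_path_aperiodic {u : Obj L} n (g : G) {m m' : Nk k.+1} :
  cN_detects_periods u -> m != m' ->
  exists x, [/\ is_infpath x, ipvert x = u &
    ~ infeq (shift m (lift_path x n g)) (shift m' (lift_path x n g))].
Proof.
move=> hR hmm'; case: (eqVneq (lstN m) (lstN m')) => hl; last first.
  have [x [hx hxv]] : exists x, is_infpath x /\ ipvert x = u.
    apply: (infpath_exists hL) => p q hpq /(hR p q hpq) [x [_ [_ [hx hxv _]]]].
    by exists x.
  by exists x; split=> //; exact: lift_path_shift_lstN.
have hf : fstN m != fstN m'.
  by apply: contra_neq hmm' => hf; rewrite -(extN_eta m) -(extN_eta m') hf hl.
case: (classic (exists x, [/\ is_infpath x, ipvert x = u &
                          ~ infeq (shift (fstN m) x) (shift (fstN m') x)])).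
  by case=> x [hx hxv hne]; exists x; split=> // /lift_path_shift_fstN.
move=> hall; have hper x : is_infpath x -> ipvert x = u ->
    infeq (shift (fstN m) x) (shift (fstN m') x).
  by move=> hx hxv; apply: NNPP => hne; apply: hall; exists x.
have [x [l [N [hx hxv hne]]]] := hR _ _ hf hper.
by exists x; split=> //; exact: (lift_path_shift_cN l hne).
Qed.

End Tower.

Theorem lemma5p4 (k : nat) (L : kdata k) (G : grp) (c : Mor L -> G)
  (H : nat -> G -> Prop)
  (hL : is_kgraph L) (hconn : connected L) (hrf : row_finite L) (hns : no_sources L)
  (hc : cocycle c)
  (huniv : connected (skew (@gmul G) c) /\ simply_connected (skew (@gmul G) c))
  (hH0 : forall g : G, H 0 g)
  (hH : forall n, [/\ normal_subgroup (H n), finite_index (H n) &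
                      forall g : G, H n.+1 g -> H n g]) :
  no_local_periodicity (tower (@pON k L G c H) (@pMN k L G c H))
  <->
  (forall (v : Obj L) (p q : Nk k), p != q ->
     (forall x, is_infpath x -> ipvert x = v -> infeq (shift p x) (shift q x)) ->
     exists x (l : Nk k) (N : nat),
       [/\ is_infpath x, ipvert x = v &
           cN c H N (x (zeroN k) (addN p l)) <> cN c H N (x (zeroN k) (addN q l))]).
Proof.
have hN n : normal_subgroup (H n) by case: (hH n).
have hHS n g : H n.+1 g -> H n g by case: (hH n) => _ _; apply.
split.
- move=> hnlp v p q hpq hper; apply: NNPP => hno.
  have hm : extN p 0 != extN q 0 by apply: contra_neq hpq => /extN_inj [].
  have [y [hy hyv hne]] := hnlp (existT _ 0 (v, cosQ (H 0) (gone G))) _ _ hm.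
  have hy0 : projT1 (ipvert y) = 0 by rewrite hyv.
  have [hx hxv] := base_path_infpath hL hy; rewrite hyv /= in hxv.
  apply: hne; apply: (y_shift_eq hL hN hy hy0); first exact: hper.
  move=> l N; apply: NNPP => hneq; apply: hno.
  by exists (base_path y), l, N; split.
- move=> hR [n [u A]] m m' /(lift_path_aperiodic hL hN hHS n (repQ A) (hR u)) [x [hx hxv hne]].
  have [hy hyv] := lift_path_at H hL hN hHS hc hx A.
  by exists (lift_path L G c H x n (repQ A)); rewrite hyv hxv.
Qed.
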